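(* Let $\Gamma$ be the graph with vertex set $\{v_{n,k}: n\in\mathbb Z,\ k\in\mathbb Z/10\mathbb Z\}$ and edge set $\{v_{n,k}v_{n,k+1}\}\cup\{v_{n,2k+1}v_{n+1,4k+2}\}$ ($n\in\mathbb Z$, $k\in\mathbb Z/10\mathbb Z$), and for $n\in\mathbb Z$ let $L_n=\{v_{n,k}: k\in\mathbb Z/10\mathbb Z\}$. Then every automorphism $\phi$ of $\Gamma$ preserves the partition $\{L_n: n\in\mathbb Z\}$, i.e. for every $n$ there is $m$ with $\phi(L_n)=L_m$.
   Context: Indices $k$ are taken modulo 10. *)

From HB Require Import structures.
From mathcomp Require Import all_boot all_order all_algebra.
Set Implicit Arguments. Unset Strict Implicit. Unset Printing Implicit Defensive.
Import Order.TTheory GRing.Theory Num.Theory.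
Local Open Scope ring_scope.

Definition vtx := (int * 'Z_10)%type.

Definition gen_edge (x y : vtx) : Prop :=
  (y.1 = x.1 /\ y.2 = x.2 + 1) \/
  (exists k : 'Z_10, y.1 = x.1 + 1 /\ x.2 = 2 * k + 1 /\ y.2 = 4 * k + 2).

Definition Gamma_adj (x y : vtx) : Prop := gen_edge x y \/ gen_edge y x.

Definition Gamma_aut (phi : vtx -> vtx) : Prop :=
  bijective phi /\ forall x y, Gamma_adj x y <-> Gamma_adj (phi x) (phi y).

Definition layer (n : int) (x : vtx) : Prop := x.1 = n.

From mathcomp Require Import all_boot all_order all_algebra ring.
Set Implicit Arguments. Unset Strict Implicit. Unset Printing Implicit Defensive.
Import GRing.Theory.
Local Open Scope ring_scope.

(* Edges of Gamma are of two kinds: "horizontal" edges v_{n,k} v_{n,k+1} inside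
   a layer, and "vertical" edges v_{n,2k+1} v_{n+1,4k+2} between consecutive
   layers.  We separate them by a graph invariant: the number of 8-cycles
   through an edge is 6 for every horizontal edge and 4 for every vertical one.

   - For an arbitrary graph given by finite neighbour lists, the cycles of a
     given length through a directed edge are enumerated by a finite search,
     and an injective graph homomorphism can only increase their number.
   - Gamma is described by explicit neighbour lists, equivalent to its
     definition.  Translations between layers are automorphisms, so the number
     of 8-cycles through an edge is computed at layer 0 by evaluation.
   - Hence an injective endomorphism of Gamma maps horizontal edges to
     horizontal edges; since a layer is connected by horizontal edges, it maps
     each layer into a single layer.  Applying this to an automorphism and to
     its inverse gives the theorem. *)

Section CyclesThroughEdge.
Variables (T : eqType) (nbrs : T -> seq T).

Definition adjn (x y : T) : bool := y \in nbrs x.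

Definition closes_cycle (l : nat) (x y : T) (s : seq T) : bool :=
  [&& size s == l, path adjn y s, adjn (last y s) x & uniq [:: x, y & s]].

Fixpoint fresh_walks (v : T) (m : nat) (seen : seq T) : seq (seq T) :=
  if m is m'.+1 then
    flatten [seq [seq w :: p | p <- fresh_walks w m' (w :: seen)]
            | w <- nbrs v & w \notin seen]
  else [:: [::]].

Definition cycles_through (l : nat) (x y : T) : seq (seq T) :=
  undup [seq s <- fresh_walks y l [:: x; y] | closes_cycle l x y s].

Lemma fresh_walks_complete (s : seq T) (v : T) (seen : seq T) :
  path adjn v s -> uniq s -> all (fun w => w \notin seen) s ->
  s \in fresh_walks v (size s) seen.
Proof.
elim: s v seen => [|w s IH] v seen; first by rewrite mem_head.
move=> /andP [vw ws] /andP [w_notin_s s_uniq] /andP [w_unseen s_unseen].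
apply/flatten_mapP; exists w; first by rewrite mem_filter w_unseen.
apply: map_f; apply: IH => //; apply/allP => z zs.
rewrite inE negb_or (allP s_unseen z zs) andbT.
by apply: contraNneq w_notin_s => <-.
Qed.

Lemma mem_cycles_through (l : nat) (x y : T) (s : seq T) :
  (s \in cycles_through l x y) = closes_cycle l x y s.
Proof.
rewrite mem_undup mem_filter andb_idr // => /and4P [/eqP <- ys _ xys_uniq].
move: xys_uniq => /= /and3P [xys yns s_uniq].
apply: fresh_walks_complete => //; apply/allP => z zs /=.
rewrite !inE negb_or; apply/andP; split.
- by apply: contraNneq xys => <-; rewrite inE zs orbT.
- by apply: contraNneq yns => <-.
Qed.

End CyclesThroughEdge.

(* An injective homomorphism maps the cycles through xy injectively to cycles
   through the image edge, so it cannot decrease their number. *)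
Lemma cycles_through_hom (T T' : eqType) (nb : T -> seq T) (nb' : T' -> seq T')
    (f : T -> T') (l : nat) (x y : T) :
  injective f -> {homo f : a b / adjn nb a b >-> adjn nb' a b} ->
  (size (cycles_through nb l x y) <= size (cycles_through nb' l (f x) (f y)))%N.
Proof.
move=> f_inj f_hom; rewrite -(size_map (map f)); apply: uniq_leq_size.
  by rewrite (map_inj_uniq (inj_map f_inj)) undup_uniq.
move=> _ /mapP [s + ->]; rewrite !mem_cycles_through.
move=> /and4P [size_s ys sx xys_uniq].
rewrite /closes_cycle size_map path_map last_map f_hom // size_s.
rewrite -[[:: f x, f y & _]]/(map f [:: x, y & s]) (map_inj_uniq f_inj) xys_uniq.
by rewrite (sub_path _ ys) // => a b /f_hom.
Qed.

(* The residues modulo 10, listed so that finite checks evaluate. *)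
Definition Z10s : seq 'Z_10 := [seq inZp i | i <- iota 0 10].

Lemma mem_Z10s (k : 'Z_10) : k \in Z10s.
Proof.
rewrite /Z10s -(valZpK k); apply: map_f.
by rewrite mem_iota /=; apply: ltn_ord.
Qed.

Lemma oddZ10P (a : 'Z_10) : reflect (exists k, a = 2 * k + 1) (odd a).
Proof.
have check : all (fun a : 'Z_10 =>
                     odd a == has (fun k : 'Z_10 => a == 2 * k + 1) Z10s) Z10s.
  by vm_compute.
rewrite (eqP (allP check a (mem_Z10s a))).
apply: (iffP hasP) => [[k _ /eqP ->]|[k ->]]; first by exists k.
by exists k; rewrite ?mem_Z10s.
Qed.

(* The odd residues j with 2 j = a: the second coordinates of the neighbours of
   a vertex v_{n,a} in layer n - 1. *)
Definition halves (a : 'Z_10) : seq 'Z_10 :=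
  [seq j : 'Z_10 <- Z10s | odd j && (2 * j == a)].

Definition nbrsG (x : vtx) : seq vtx :=
  [:: (x.1, x.2 + 1); (x.1, x.2 - 1)]
  ++ (if odd x.2 then [:: (x.1 + 1, 2 * x.2)] else [::])
  ++ [seq (x.1 - 1, j) | j <- halves x.2].

Notation adjG := (adjn nbrsG).

Lemma mem_nbrsG (x y : vtx) :
  adjG x y = [|| y == (x.1, x.2 + 1), y == (x.1, x.2 - 1),
                 odd x.2 && (y == (x.1 + 1, 2 * x.2))
               | (y.1 == x.1 - 1) && odd y.2 && (2 * y.2 == x.2)].
Proof.
case: x y => n a [m b]; rewrite /adjn /nbrsG !mem_cat !inE /= -!orbA.
have -> : ((m, b) \in if odd a then [:: (n + 1, 2 * a)] else [::])
          = odd a && ((m, b) == (n + 1, 2 * a)) by case: odd; rewrite ?inE.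
congr [|| _, _, _ | _]; apply/mapP/idP => [[j]|/andP [/andP [/eqP -> bodd] b2]].
  rewrite mem_filter mem_Z10s andbT => /andP [jodd /eqP <-] [-> ->].
  by rewrite jodd !eqxx.
by exists b; rewrite // mem_filter mem_Z10s bodd b2.
Qed.

Lemma vertical_edgeP (n m : int) (a b : 'Z_10) :
  (exists k : 'Z_10, m = n + 1 /\ a = 2 * k + 1 /\ b = 4 * k + 2) <->
  [/\ odd a, m = n + 1 & b = 2 * a].
Proof.
split=> [[k [-> [xk ->]]]|[/oddZ10P [k xk] -> ->]].
  by split=> //; [apply/oddZ10P; exists k | rewrite xk; ring].
by exists k; split=> //; split=> //; rewrite xk; ring.
Qed.

Lemma adjGP (x y : vtx) : Gamma_adj x y <-> adjG x y.
Proof.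
case: x y => n a [m b]; rewrite mem_nbrsG /Gamma_adj /gen_edge /=.
split.
- case=> [[[-> ->]|/vertical_edgeP [aodd -> ->]]
          |[[-> ->]|/vertical_edgeP [bodd -> ->]]].
  + by rewrite eqxx.
  + by rewrite aodd eqxx !orbT.
  + by rewrite addrK eqxx orbT.
  + by rewrite addrK bodd !eqxx !orbT.
- case/or4P=> [/eqP [-> ->]|/eqP [-> ->]|/andP [aodd /eqP [-> ->]]|].
  + by left; left.
  + by right; left; rewrite subrK.
  + by left; right; apply/vertical_edgeP.
  + move=> /andP [/andP [/eqP -> bodd] /eqP <-].
    by right; right; apply/vertical_edgeP; rewrite subrK.
Qed.

Definition ncycles8 (x y : vtx) : nat := size (cycles_through nbrsG 6 x y).

(* Shifting all layers by c is an automorphism of Gamma, so it preserves the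
   number of 8-cycles through an edge. *)
Definition shift (c : int) (v : vtx) : vtx := (v.1 + c, v.2).

Lemma shiftK (c : int) : cancel (shift c) (shift (- c)).
Proof. by case=> n a; rewrite /shift /= addrK. Qed.

Lemma nbrsG_shift (c : int) (v : vtx) :
  nbrsG (shift c v) = map (shift c) (nbrsG v).
Proof.
rewrite /nbrsG /shift /= !map_cat -map_comp; congr [:: _, _ & _ ++ _].
- by case: odd => //=; rewrite addrAC.
- by apply: eq_map => j /=; rewrite addrAC.
Qed.

Lemma shift_hom (c : int) : {homo shift c : a b / adjG a b}.
Proof. by move=> a b ab; rewrite /adjn nbrsG_shift map_f. Qed.

Lemma ncycles8_shift (c : int) (x y : vtx) :
  ncycles8 (shift c x) (shift c y) = ncycles8 x y.
Proof.
apply/eqP; rewrite eqn_leq; apply/andP; split.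
  by rewrite -{2}(shiftK c x) -{2}(shiftK c y);
     apply: cycles_through_hom (can_inj (shiftK (- c))) (shift_hom (- c)).
exact: cycles_through_hom (can_inj (shiftK c)) (shift_hom c).
Qed.

Lemma ncycles8_layer0 :
  all (fun a : 'Z_10 =>
         all (fun y => ncycles8 (0, a) y == (if y.1 == 0 then 6 else 4)%N)
             (nbrsG (0, a))) Z10s.
Proof. by vm_compute. Qed.

Lemma ncycles8_edge (x y : vtx) :
  adjG x y -> ncycles8 x y = if x.1 == y.1 then 6%N else 4%N.
Proof.
move=> xy; rewrite -(ncycles8_shift (- x.1)).
have x0 : shift (- x.1) x = (0, x.2) by rewrite /shift subrr.
have y_adj : adjG (0, x.2) (shift (- x.1) y) by rewrite -x0 shift_hom.
have -> : (x.1 == y.1) = ((shift (- x.1) y).1 == 0) by rewrite subr_eq0 eq_sym.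
by rewrite x0; apply/eqP; apply: (allP (allP ncycles8_layer0 _ (mem_Z10s _))).
Qed.

Section InjectiveEndomorphism.
Variable f : vtx -> vtx.
Hypotheses (f_inj : injective f) (f_hom : {homo f : a b / adjG a b}).

(* f cannot send a horizontal edge (six 8-cycles) to a vertical one (four). *)
Lemma hom_horizontal (x y : vtx) : adjG x y -> x.1 = y.1 -> (f x).1 = (f y).1.
Proof.
move=> xy xy_layer; have := cycles_through_hom 6 x y f_inj f_hom.
rewrite -/(ncycles8 x y) -/(ncycles8 (f x) (f y)).
by rewrite !ncycles8_edge ?f_hom // xy_layer eqxx; case: eqP.
Qed.

(* Each layer is connected by horizontal edges, so f maps it into one layer. *)
Lemma hom_same_layer (x y : vtx) : x.1 = y.1 -> (f x).1 = (f y).1.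
Proof.
suff to_origin n (k : 'Z_10) : (f (n, k)).1 = (f (n, 0)).1.
  by case: x y => n a [m b] /= ->; rewrite !to_origin.
rewrite -(natr_Zp k); elim: (nat_of_ord k) => [//|i IH].
rewrite -natr1 -IH; symmetry; apply: hom_horizontal => //.
by rewrite mem_nbrsG /= eqxx.
Qed.

End InjectiveEndomorphism.

Lemma aut_hom (phi g : vtx -> vtx) :
  Gamma_aut phi -> cancel g phi ->
  {homo phi : a b / adjG a b} /\ {homo g : a b / adjG a b}.
Proof.
move=> [_ phi_adj] gK; split=> a b /adjGP ab; apply/adjGP.
  by apply/(phi_adj a b).
by apply/(phi_adj (g a) (g b)); rewrite !gK.
Qed.

Theorem mainTheorem4 (phi : vtx -> vtx) (hphi : Gamma_aut phi) :
  forall n : int, exists m : int,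
    (forall x, layer n x -> layer m (phi x)) /\
    (forall y, layer m y -> exists x, layer n x /\ phi x = y).
Proof.
have [[g phiK gK] _] := hphi; move=> n.
have [phi_hom g_hom] := aut_hom hphi gK.
have phi_layer := hom_same_layer (can_inj phiK) phi_hom.
have g_layer := hom_same_layer (can_inj gK) g_hom.
exists (phi (n, 0)).1; split=> [x xn|y ym].
  by apply: phi_layer; rewrite xn.
exists (g y); split; last exact: gK.
by rewrite /layer (g_layer _ (phi (n, 0)) ym) phiK.
Qed.
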